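(* Let $G=(V,E)$ be a finite connected graph, let $\varepsilon>0$ and $\rho\ge1$. There exist a vertex $v_0\in V$ and positive real numbers $(\omega_v)_{v\in V}$ such that: for every $v\in V\setminus\{v_0\}$ there is a neighbour $u$ of $v$ with $\omega_v\le\varepsilon\,\omega_u^\rho$; $\omega_{v_0}>1/2$; and $\sum_{v\in V}\omega_v=1$.
   Context: Two vertices $u,v$ are neighbours if $uv$ is an edge; a graph is connected if any two vertices are joined by a path of edges. *)

From HB Require Import structures.
From mathcomp Require Import all_boot all_order all_algebra.
From mathcomp Require Import all_classical all_reals all_analysis.
Set Implicit Arguments. Unset Strict Implicit. Unset Printing Implicit Defensive.

Definition simple_graph (T : finType) (e : rel T) : Prop :=
  symmetric e /\ irreflexive e.

Definition graph_connected (T : finType) (e : rel T) : Prop :=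
  forall x y : T, connect e x y.

From HB Require Import structures.
From mathcomp Require Import all_boot all_order all_algebra.
From mathcomp Require Import all_classical all_reals all_analysis.
From mathcomp Require Import lra.

Set Implicit Arguments.
Unset Strict Implicit.
Unset Printing Implicit Defensive.
Import Order.TTheory GRing.Theory Num.Theory.
Local Open Scope ring_scope.

(* Pick a root v0 and let every other vertex v carry the weight a_(d v),
   where d is the graph distance to v0 and (a_k) is a positive sequence with
   a_(k+1) <= min (eps a_k^rho, a_k, delta).  A neighbour u of v closer to the
   root then witnesses omega_v <= eps omega_u^rho.  Choosing delta = 1/(4|V|)
   makes the non-root weights sum to at most 1/4, and the root receives the
   remaining mass, which exceeds 1/2 >= a_0 and so only helps its neighbours. *)

Section RootDistance.
Variables (T : finType) (e : rel T) (r : T).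
Hypothesis reach_root : forall v, connect e v r.

Definition path_to_root_of_size (v : T) (n : nat) : bool :=
  [exists p : n.-tuple T, path e v p && (last v p == r)].

Lemma exists_path_to_root v : exists n, path_to_root_of_size v n.
Proof.
have /connectP[p e_p last_p] := reach_root v.
exists (size p); apply/existsP.
by exists (in_tuple p); rewrite /= e_p -last_p eqxx.
Qed.

Definition root_dist (v : T) : nat := ex_minn (exists_path_to_root v).

Lemma root_dist_step v : v != r -> exists2 u, e v u & (root_dist u < root_dist v)%N.
Proof.
move=> v_neq_r; rewrite /root_dist.
case: ex_minnP => n /existsP[[[|u p] /= /eqP size_p]]; first by rewrite (negbTE v_neq_r).
case/andP=> /andP[e_vu e_p] last_p _; exists u => //.
case: ex_minnP => m _ /(_ (size p)) le_m_p; rewrite -size_p ltnS le_m_p //.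
by apply/existsP; exists (in_tuple p); rewrite /= e_p.
Qed.

End RootDistance.

Section DescentSequence.
Variables (R : realType) (eps rho delta a0 : R).
Hypotheses (eps_gt0 : 0 < eps) (delta_gt0 : 0 < delta) (a0_gt0 : 0 < a0).

Fixpoint descent_seq (k : nat) : R :=
  if k is k'.+1 then Num.min (Num.min (eps * descent_seq k' `^ rho) (descent_seq k')) delta
  else a0.

Lemma descent_seq_gt0 k : 0 < descent_seq k.
Proof.
elim: k => [|k IHk] //=.
by rewrite !lt_min delta_gt0 IHk mulr_gt0 ?powR_gt0.
Qed.

Lemma descent_seq_le_delta k : (0 < k)%N -> descent_seq k <= delta.
Proof. by case: k => // k _; rewrite /= ge_min lexx orbT. Qed.

Lemma descent_seq_nonincreasing : {homo descent_seq : m n / (m <= n)%N >-> n <= m}.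
Proof. by apply/nonincreasing_seqP => k; rewrite /= !ge_min lexx orbT. Qed.

Lemma descent_seq_le_start k : descent_seq k <= a0.
Proof. by rewrite -[leRHS]/(descent_seq 0) descent_seq_nonincreasing. Qed.

Lemma descent_seq_lt m n : (m < n)%N -> descent_seq n <= eps * descent_seq m `^ rho.
Proof.
move=> lt_mn; apply: le_trans (descent_seq_nonincreasing lt_mn) _.
by rewrite /= !ge_min lexx.
Qed.

End DescentSequence.

Section RootedWeights.
Variables (R : realType) (T : finType) (e : rel T) (r : T).
Hypothesis reach_root : forall v, connect e v r.
Variables (eps rho w0 : R) (a : nat -> R).

Definition rooted_weight (v : T) : R :=
  if v == r then w0 else a (root_dist reach_root v).

Lemma sum_rooted_weight :
  \sum_(v : T) rooted_weight v = w0 + \sum_(v | v != r) a (root_dist reach_root v).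
Proof.
rewrite (bigD1 r) //= {1}/rooted_weight eqxx; congr (_ + _).
by apply: eq_bigr => v /negbTE v_neq_r; rewrite /rooted_weight v_neq_r.
Qed.

Hypotheses (eps_gt0 : 0 < eps) (rho_ge0 : 0 <= rho).
Hypotheses (a_gt0 : forall k, 0 < a k) (a_le_w0 : forall k, a k <= w0).
Hypothesis a_lt : forall m n, (m < n)%N -> a n <= eps * a m `^ rho.

Lemma le_rooted_weight v : a (root_dist reach_root v) <= rooted_weight v.
Proof. by rewrite /rooted_weight; case: eqP. Qed.

Lemma rooted_weight_gt0 v : 0 < rooted_weight v.
Proof. exact: lt_le_trans (le_rooted_weight v). Qed.

Lemma rooted_weight_descent v :
  v != r -> exists2 u, e v u & rooted_weight v <= eps * rooted_weight u `^ rho.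
Proof.
move=> v_neq_r; have [u e_vu lt_du_dv] := root_dist_step reach_root v_neq_r.
exists u => //; rewrite {1}/rooted_weight (negbTE v_neq_r).
apply: le_trans (a_lt lt_du_dv) _; rewrite ler_pM2l //.
apply: ge0_ler_powR; rewrite ?nnegrE ?le_rooted_weight //.
  exact/ltW.
exact/ltW/rooted_weight_gt0.
Qed.

End RootedWeights.

Theorem lemma2p9 (R : realType) (T : finType) (e : rel T)
  (Hsimple : simple_graph e) (Hconn : graph_connected e)
  (Hne : (0 < #|T|)%N) (eps rho : R) (Heps : 0 < eps) (Hrho : 1 <= rho) :
  exists (v0 : T) (omega : T -> R),
    (forall v, 0 < omega v) /\
    (forall v, v != v0 -> exists2 u, e v u & omega v <= eps * omega u `^ rho) /\
    1 / 2 < omega v0 /\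
    \sum_(v : T) omega v = 1.
Proof.
have [v0 _] := card_gt0P Hne.
have reach_v0 v : connect e v v0 := Hconn v v0.
pose delta : R := (4 * #|T|%:R)^-1.
have delta_gt0 : 0 < delta by rewrite invr_gt0 mulr_gt0 ?ltr0n.
pose a := descent_seq eps rho delta (1 / 2).
have a_gt0 k : 0 < a k by apply: descent_seq_gt0.
pose S := \sum_(v | v != v0) a (root_dist reach_v0 v).
have S_ge0 : 0 <= S by apply: sumr_ge0 => v _; apply/ltW.
have S_le : S <= 1 / 4.
  apply: le_trans (_ : \sum_(v : T) delta <= _); last first.
    rewrite sumr_const -[_ *+ _]mulr_natr /delta invfM -mulrA.
    by rewrite mulVf ?pnatr_eq0 -?lt0n // mulr1 div1r.
  rewrite [X in _ <= X](bigD1 v0) //= -[S]add0r; apply: lerD; first exact: ltW.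
  apply: ler_sum => v /(root_dist_step reach_v0)[u _ lt_du_dv].
  by apply: descent_seq_le_delta; apply: leq_ltn_trans lt_du_dv.
have a_le_w0 k : a k <= 1 - S.
  by apply: le_trans (descent_seq_le_start _ _ _ _ _) _; lra.
exists v0, (rooted_weight reach_v0 (1 - S) a); split; [|split; [|split]].
- by apply: rooted_weight_gt0.
- by apply: rooted_weight_descent => //; [lra | apply: descent_seq_lt].
- by rewrite /rooted_weight eqxx; lra.
- by rewrite sum_rooted_weight subrK.
Qed.
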